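(* Let $A$ be a commutative algebra over a field of characteristic $p\neq3$ with multiplication $\star$ satisfying the Tortken identity $(a\star b)\star(c\star d)-(a\star d)\star(c\star b)=(a,b,c)\star d-(a,d,c)\star b$. Then for all $a,b,c,x,y\in A$, $$(a,(b,x,c),y)+(b,(c,x,a),y)+(c,(a,x,b),y)-(a,(b,y,c),x)-(b,(c,y,a),x)-(c,(a,y,b),x)=0.$$
   Context: The associator is $(a,b,c)=a\star(b\star c)-(a\star b)\star c$. *)

From mathcomp Require Import all_boot all_algebra.
Set Implicit Arguments. Unset Strict Implicit. Unset Printing Implicit Defensive.
Import GRing.Theory.
Local Open Scope ring_scope.

Definition bilinear_mul (F : fieldType) (A : lmodType F) (mul : A -> A -> A) :=
  (forall (k : F) (a b c : A), mul (k *: a + b) c = k *: mul a c + mul b c) /\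
  (forall (k : F) (a b c : A), mul a (k *: b + c) = k *: mul a b + mul a c).

Definition commutative_mul (A : Type) (mul : A -> A -> A) :=
  forall a b, mul a b = mul b a.

Definition assoc (A : zmodType) (mul : A -> A -> A) (a b c : A) : A :=
  mul a (mul b c) - mul (mul a b) c.

Definition tortken (A : zmodType) (mul : A -> A -> A) :=
  forall a b c d : A,
    mul (mul a b) (mul c d) - mul (mul a d) (mul c b)
    = mul (assoc mul a b c) d - mul (assoc mul a d c) b.

From HB Require Import structures.
From mathcomp Require Import all_boot all_algebra.
Set Implicit Arguments. Unset Strict Implicit. Unset Printing Implicit Defensive.
Import GRing.Theory.
Local Open Scope ring_scope.

(* Three times the left-hand side is an explicit integer combination of 32
   instances of the Tortken identity, some with variables replaced by products
   and some multiplied on the right by a fifth variable.  This is an identity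
   in the free commutative magma ring over the integers, so it can be verified
   by normalising to commutative monomials; this is where commutativity and
   biadditivity are used.  Dividing by 3 needs the characteristic to be
   different from 3. *)

Section BiadditiveMul.
Variables (A : zmodType) (mul : A -> A -> A).
Hypotheses (mulDl : left_distributive mul +%R) (mulDr : right_distributive mul +%R).

Lemma bimul0l c : mul 0 c = 0.
Proof. by apply: (addrI (mul 0 c)); rewrite -mulDl !addr0. Qed.

Lemma bimul0r c : mul c 0 = 0.
Proof. by apply: (addrI (mul c 0)); rewrite -mulDr !addr0. Qed.

Lemma bimulzl a c z : mul (a *~ z) c = mul a c *~ z.
Proof.
have mulnl n : mul (a *+ n) c = mul a c *+ n.
  by elim: n => [|n IH]; rewrite ?bimul0l // !mulrS mulDl IH.
have mulNl b : mul (- b) c = - mul b c.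
  by apply: (addrI (mul b c)); rewrite -mulDl !subrr bimul0l.
by case: z => n; rewrite ?NegzE ?mulrNz ?mulNl mulnl.
Qed.

Lemma bimulzr a c z : mul c (a *~ z) = mul c a *~ z.
Proof.
have mulnr n : mul c (a *+ n) = mul c a *+ n.
  by elim: n => [|n IH]; rewrite ?bimul0r // !mulrS mulDr IH.
have mulNr b : mul c (- b) = - mul c b.
  by apply: (addrI (mul c b)); rewrite -mulDr !subrr bimul0r.
by case: z => n; rewrite ?NegzE ?mulrNz ?mulNr mulnr.
Qed.

Lemma bimul_suml I (r : seq I) (f : I -> A) c :
  mul (\sum_(i <- r) f i) c = \sum_(i <- r) mul (f i) c.
Proof. exact: (big_morph (mul^~ c) (fun a b => mulDl a b c) (bimul0l c)). Qed.

Lemma bimul_sumr I (r : seq I) (f : I -> A) c :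
  mul c (\sum_(i <- r) f i) = \sum_(i <- r) mul c (f i).
Proof. exact: (big_morph (mul c) (mulDr c) (bimul0r c)). Qed.

End BiadditiveMul.

Lemma bilinear_mulDl (F : fieldType) (A : lmodType F) (mul : A -> A -> A) :
  bilinear_mul mul -> left_distributive mul +%R.
Proof. by case=> mulDl _ a b c; rewrite -[a]scale1r mulDl !scale1r. Qed.

Lemma bilinear_mulDr (F : fieldType) (A : lmodType F) (mul : A -> A -> A) :
  bilinear_mul mul -> right_distributive mul +%R.
Proof. by case=> _ mulDr a b c; rewrite -[b]scale1r mulDr !scale1r. Qed.

Lemma lmod_mulrn_eq0 (F : fieldType) (V : lmodType F) (v : V) n :
  n%:R != 0 :> F -> v *+ n = 0 -> v = 0.
Proof. by move=> n_neq0 /eqP; rewrite -scaler_nat scaler_eq0 (negbTE n_neq0) => /eqP. Qed.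

Inductive cmono := MVar of nat | MMul of cmono & cmono.

Fixpoint cmono_eqb (m n : cmono) : bool :=
  match m, n with
  | MVar i, MVar j => i == j
  | MMul m1 m2, MMul n1 n2 => cmono_eqb m1 n1 && cmono_eqb m2 n2
  | _, _ => false
  end.

Lemma cmono_eqP : Equality.axiom cmono_eqb.
Proof.
elim=> [i|m1 IH1 m2 IH2] [j|n1 n2] /=; try by constructor.
  by apply: (iffP eqP) => [->|[]].
by apply: (iffP andP) => [[/IH1 -> /IH2 ->] | [<- <-]]; split; [apply/IH1 | apply/IH2].
Qed.

HB.instance Definition _ := hasDecEq.Build cmono cmono_eqP.

Fixpoint cmono_cmp (m n : cmono) : comparison :=
  match m, n with
  | MVar i, MVar j => Nat.compare i j
  | MVar _, MMul _ _ => Lt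
  | MMul _ _, MVar _ => Gt
  | MMul m1 m2, MMul n1 n2 =>
      match cmono_cmp m1 n1 with Eq => cmono_cmp m2 n2 | c => c end
  end.

(* Ordering the two factors makes every monomial built by [cmono_mul] the
   canonical representative of its class in the free commutative magma. *)
Definition cmono_mul (m n : cmono) : cmono :=
  if cmono_cmp m n is Gt then MMul n m else MMul m n.

Inductive expr :=
  | EVar of nat
  | EZero
  | EMul of expr & expr
  | EAdd of expr & expr
  | ESub of expr & expr
  | EZmul of int & expr.

Definition polyform := seq (int * cmono).

Fixpoint polyform_of (e : expr) : polyform :=
  match e with
  | EVar n => [:: (1, MVar n)]
  | EZero => [::]
  | EMul e f => [seq (p.1 * q.1, cmono_mul p.2 q.2) | p <- polyform_of e, q <- polyform_of f]
  | EAdd e f => polyform_of e ++ polyform_of f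
  | ESub e f => polyform_of e ++ [seq (- p.1, p.2) | p <- polyform_of f]
  | EZmul z e => [seq (z * p.1, p.2) | p <- polyform_of e]
  end.

(* A [foldr] rather than a [\sum], so that it computes under [vm_compute]. *)
Definition coef_polyform (l : polyform) (m : cmono) : int :=
  foldr (fun p s => if p.2 == m then p.1 + s else s) 0 l.

(* [fuel] only bounds the recursion; [size l] always suffices. *)
Fixpoint zero_coefs (fuel : nat) (l : polyform) : bool :=
  match fuel, l with
  | _, [::] => true
  | 0, _ :: _ => false
  | fuel.+1, p :: _ =>
      (coef_polyform l p.2 == 0) && zero_coefs fuel [seq q <- l | q.2 != p.2]
  end.

Definition polyform_eq0 (l : polyform) : bool := zero_coefs (size l) l.

Section Evaluation.
Variables (A : zmodType) (mul : A -> A -> A).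
Hypotheses (mulDl : left_distributive mul +%R) (mulDr : right_distributive mul +%R).
Hypothesis mulC : commutative mul.
Variable env : nat -> A.

Fixpoint eval_cmono (m : cmono) : A :=
  match m with MVar n => env n | MMul m n => mul (eval_cmono m) (eval_cmono n) end.

Fixpoint eval_expr (e : expr) : A :=
  match e with
  | EVar n => env n
  | EZero => 0
  | EMul e f => mul (eval_expr e) (eval_expr f)
  | EAdd e f => eval_expr e + eval_expr f
  | ESub e f => eval_expr e - eval_expr f
  | EZmul z e => eval_expr e *~ z
  end.

Definition eval_polyform (l : polyform) : A := \sum_(p <- l) eval_cmono p.2 *~ p.1.

Lemma eval_cmono_mul m n : eval_cmono (cmono_mul m n) = mul (eval_cmono m) (eval_cmono n).
Proof. by rewrite /cmono_mul; case: cmono_cmp => //=; rewrite mulC. Qed.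

Lemma eval_polyform_of e : eval_expr e = eval_polyform (polyform_of e).
Proof.
rewrite /eval_polyform; elim: e => [n||e IHe f IHf|e IHe f IHf|e IHe f IHf|z e IHe] /=.
- by rewrite big_seq1.
- by rewrite big_nil.
- rewrite IHe IHf big_allpairs_dep (bimul_suml mulDl); apply: eq_bigr => p _.
  rewrite (bimul_sumr mulDr); apply: eq_bigr => q _.
  by rewrite (bimulzl mulDl) (bimulzr mulDr) eval_cmono_mul mulrzA mulrzAC.
- by rewrite IHe IHf big_cat.
- rewrite IHe IHf big_cat big_map -sumrN /=; congr (_ + _).
  by apply: eq_bigr => p _; rewrite mulrNz.
- by rewrite IHe big_map mulrz_suml; apply: eq_bigr => p _; rewrite mulrzA_C.
Qed.

Lemma eval_coef_polyform l m :
  \sum_(p <- l | p.2 == m) eval_cmono p.2 *~ p.1 = eval_cmono m *~ coef_polyform l m.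
Proof.
elim: l => [|p l IH]; first by rewrite big_nil.
by rewrite big_cons /= IH; case: eqP => // ->; rewrite mulrzDr.
Qed.

Lemma zero_coefsP fuel l : zero_coefs fuel l -> eval_polyform l = 0.
Proof.
rewrite /eval_polyform.
elim: fuel l => [|fuel IH] [|p l] //; rewrite ?big_nil //.
move=> /andP[/eqP coef_p0 /IH rest0].
rewrite (bigID (fun q : int * cmono => q.2 == p.2)) /= eval_coef_polyform coef_p0.
by rewrite mulr0z add0r -big_filter.
Qed.

Lemma polyform_eq0P e : polyform_eq0 (polyform_of e) -> eval_expr e = 0.
Proof. by rewrite eval_polyform_of; apply: zero_coefsP. Qed.

End Evaluation.

Definition EAssoc (e f g : expr) : expr := ESub (EMul e (EMul f g)) (EMul (EMul e f) g).

Definition ETortken (a b c d : expr) : expr :=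
  ESub (ESub (EMul (EMul a b) (EMul c d)) (EMul (EMul a d) (EMul c b)))
       (ESub (EMul (EAssoc a b c) d) (EMul (EAssoc a d c) b)).

Inductive tortken_rel :=
  | Tk of expr & expr & expr & expr
  | TkMul of expr & expr & expr & expr & expr.

Definition expr_of_rel (r : tortken_rel) : expr :=
  match r with
  | Tk a b c d => ETortken a b c d
  | TkMul a b c d e => EMul (ETortken a b c d) e
  end.

Definition rel_combination (cert : seq (int * tortken_rel)) : expr :=
  foldr (fun p e => EAdd (EZmul p.1 (expr_of_rel p.2)) e) EZero cert.

Section TortkenCertificate.
Variables (A : zmodType) (mul : A -> A -> A).
Hypotheses (mulDl : left_distributive mul +%R) (mulDr : right_distributive mul +%R).
Hypothesis mulC : commutative mul.
Hypothesis mul_tortken : tortken mul.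
Variable env : nat -> A.

Lemma eval_rel r : eval_expr mul env (expr_of_rel r) = 0.
Proof.
have eval_tk a b c d : eval_expr mul env (ETortken a b c d) = 0.
  by apply/eqP; rewrite subr_eq0; apply/eqP/mul_tortken.
case: r => [a b c d|a b c d e]; first exact: eval_tk.
change (mul (eval_expr mul env (ETortken a b c d)) (eval_expr mul env e) = 0).
by rewrite eval_tk bimul0l.
Qed.

Lemma eval_rel_combination cert : eval_expr mul env (rel_combination cert) = 0.
Proof. by elim: cert => [|[z r] cert IH] //=; rewrite IH eval_rel mul0rz addr0. Qed.

Lemma tortken_certificateP cert n e :
  polyform_eq0 (polyform_of (ESub (rel_combination cert) (EZmul n e))) ->
  eval_expr mul env e *~ n = 0.
Proof.
move=> /(polyform_eq0P mulDl mulDr mulC env) /=.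
by rewrite eval_rel_combination sub0r => /eqP; rewrite oppr_eq0 => /eqP.
Qed.

End TortkenCertificate.

Definition EThm20 (a b c x y : expr) : expr :=
  ESub (ESub (ESub (EAdd (EAdd (EAssoc a (EAssoc b x c) y) (EAssoc b (EAssoc c x a) y))
                         (EAssoc c (EAssoc a x b) y))
                   (EAssoc a (EAssoc b y c) x))
             (EAssoc b (EAssoc c y a) x))
       (EAssoc c (EAssoc a y b) x).

Definition thm20_certificate (a b c x y : expr) : seq (int * tortken_rel) :=
  [:: (3, TkMul a b c x y); (-3, Tk a (EMul c y) b x); (-2, TkMul a b x y c);
      (2, TkMul a b y x c); (-3, TkMul a c b x y); (2, Tk (EMul b y) a c x);
      (1, Tk a (EMul b y) c x); (2, Tk a c (EMul b y) x); (-2, Tk (EMul b x) a c y);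
      (2, Tk a (EMul b x) c y); (-2, Tk a c (EMul b x) y); (1, Tk (EMul c y) a x b);
      (2, TkMul a x b y c); (-3, Tk (EMul b y) a x c); (2, TkMul a x c y b);
      (2, Tk (EMul b c) a x y); (-2, Tk a (EMul b c) x y); (2, Tk a x (EMul b c) y);
      (-2, Tk a x y (EMul b c)); (-1, Tk (EMul c x) a y b); (3, Tk (EMul b x) a y c);
      (-2, Tk (EMul b c) a y x); (-3, TkMul b a c x y); (2, TkMul b a x y c);
      (-2, TkMul b a y x c); (-3, Tk b (EMul a y) c x); (-2, Tk b c x (EMul a y));
      (-2, TkMul b c x y a); (2, Tk b c y (EMul a x)); (2, TkMul b c y x a);
      (1, Tk (EMul a y) b x c); (-1, Tk (EMul a x) b y c)].

Theorem mainTheorem20 (F : fieldType) (A : lmodType F) (mul : A -> A -> A)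
  (hchar : ~~ (3%N \in [pchar F]))
  (hbil : bilinear_mul mul) (hcomm : commutative_mul mul) (htk : tortken mul) :
  forall a b c x y : A,
    assoc mul a (assoc mul b x c) y + assoc mul b (assoc mul c x a) y
    + assoc mul c (assoc mul a x b) y
    - assoc mul a (assoc mul b y c) x - assoc mul b (assoc mul c y a) x
    - assoc mul c (assoc mul a y b) x = 0.
Proof.
move=> a b c x y.
pose env n := nth 0 [:: a; b; c; x; y] n.
have three_neq0 : 3%:R != 0 :> F by move: hchar; rewrite inE.
apply: (lmod_mulrn_eq0 three_neq0).
apply: (tortken_certificateP (bilinear_mulDl hbil) (bilinear_mulDr hbil) hcomm htk env
          (cert := thm20_certificate (EVar 0) (EVar 1) (EVar 2) (EVar 3) (EVar 4))
          (e := EThm20 (EVar 0) (EVar 1) (EVar 2) (EVar 3) (EVar 4)) (n := 3%N)).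
by vm_compute.
Qed.
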